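(* Let $\alpha,\beta,\nu>0$ and set $\beta_t=t\beta$, $\alpha_t=\sqrt{t+1}\,\alpha$, $\gamma_t=\frac{\alpha\nu}{\beta\sqrt{t+1}}$, $\omega_t=1$. Then for every integer $t\ge1$ and every symmetric positive definite $\boldsymbol\Sigma\in\mathbb{R}^{d\times d}$ there exists a symmetric matrix $\boldsymbol H\in\mathbb{R}^{d\times d}$ such that $$\boldsymbol H\preceq\frac1{\alpha_t}\Big(\frac{\beta_{t+1}}{\beta_t}-\omega_t\Big)\boldsymbol I+\frac{\beta_{t+1}\gamma_t}{\alpha_t}\boldsymbol\Sigma\quad\text{and}\quad\nu\boldsymbol I\preceq\boldsymbol\Sigma^{-1/2}\boldsymbol H\boldsymbol\Sigma^{-1/2}.$$ In particular, along any run of the CASBO algorithm with these parameters, the constraints on $\boldsymbol H_k^t$ (with $\boldsymbol\Sigma=\boldsymbol\Sigma_k^t$) are always feasible.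
   Context: $\preceq$ denotes the Loewner order on symmetric matrices; $\boldsymbol\Sigma^{-1/2}$ is the inverse of the symmetric positive definite square root. In the CASBO algorithm, at iteration $t$ and for block $k$, a symmetric matrix $\boldsymbol H_k^t$ must be chosen satisfying exactly the two displayed constraints with $\boldsymbol\Sigma$ the current covariance $\boldsymbol\Sigma_k^t$ (which is symmetric positive definite). *)

From HB Require Import structures.
From mathcomp Require Import all_boot all_order all_algebra.
Set Implicit Arguments. Unset Strict Implicit. Unset Printing Implicit Defensive.
Import Order.TTheory GRing.Theory Num.Theory.
Local Open Scope ring_scope.

Section Defs.
Variable R : rcfType.

Definition qform (d : nat) (A : 'M[R]_d) (x : 'cV[R]_d) : R := (x^T *m A *m x) 0 0.

Definition sym_mx (d : nat) (A : 'M[R]_d) : Prop := A^T = A.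

Definition psd (d : nat) (A : 'M[R]_d) : Prop :=
  sym_mx A /\ forall x : 'cV[R]_d, 0 <= qform A x.

Definition spd (d : nat) (A : 'M[R]_d) : Prop :=
  sym_mx A /\ forall x : 'cV[R]_d, x != 0 -> 0 < qform A x.

Definition loewner_le (d : nat) (A B : 'M[R]_d) : Prop := psd (B - A).

Definition is_spd_sqrt (d : nat) (S Sigma : 'M[R]_d) : Prop :=
  spd S /\ S *m S = Sigma.

Definition beta_t (beta : R) (t : nat) : R := t%:R * beta.
Definition alpha_t (alpha : R) (t : nat) : R := Num.sqrt (t.+1)%:R * alpha.
Definition gamma_t (alpha beta nu : R) (t : nat) : R :=
  alpha * nu / (beta * Num.sqrt (t.+1)%:R).
Definition omega_t (t : nat) : R := 1.

End Defs.

From HB Require Import structures.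
From mathcomp Require Import all_boot all_order all_algebra.
From mathcomp Require Import ring.
Import Order.TTheory GRing.Theory Num.Theory.
Local Open Scope ring_scope.

(* The witness is H = nu Sigma.  Whitening by Sigma^(-1/2) turns it into
   exactly nu I, and with this schedule the coefficient of Sigma in the upper
   bound is exactly nu, so the upper bound reduces to c I >= 0 for the
   coefficient c = 1 / (t alpha_t) of the identity. *)

Section Loewner.
Variables (R : rcfType) (d : nat).

Lemma psd_scalar_mx (c : R) : 0 <= c -> psd (c%:M : 'M[R]_d).
Proof.
move=> c_ge0; split; first by rewrite /sym_mx tr_scalar_mx.
move=> x; rewrite /qform mul_mx_scalar -scalemxAl mxE mulr_ge0 // !mxE.
by apply: sumr_ge0 => i _; rewrite mxE -expr2 sqr_ge0.
Qed.

Lemma loewner_lexx (A : 'M[R]_d) : loewner_le A A.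
Proof. by rewrite /loewner_le subrr -(raddf0 (@scalar_mx R d)); apply: psd_scalar_mx. Qed.

Lemma loewner_le_addl (c : R) (A : 'M[R]_d) :
  0 <= c -> loewner_le A (c%:M + A).
Proof. by move=> c_ge0; rewrite /loewner_le addrK; apply: psd_scalar_mx. Qed.

Lemma spd_unitmx (A : 'M[R]_d) : spd A -> A \in unitmx.
Proof.
move=> [_ A_pos]; rewrite unitmxE unitfE; apply/negP => /det0P [v v_neq0 vA0].
have := A_pos v^T; rewrite trmx_eq0 => /(_ v_neq0).
by rewrite /qform trmxK vA0 mul0mx mxE ltxx.
Qed.

Lemma invmx_spd_sqrt_conj (S Sigma : 'M[R]_d) :
  is_spd_sqrt S Sigma -> invmx S *m Sigma *m invmx S = 1%:M.
Proof.
move=> [/spd_unitmx S_unit <-].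
by rewrite !mulmxA (mulVmx S_unit) mul1mx (mulmxV S_unit).
Qed.

End Loewner.

Section Schedule.
Variables (R : rcfType) (alpha beta nu : R).
Hypotheses (alpha_gt0 : 0 < alpha) (beta_gt0 : 0 < beta).

Let sqrt_gt0 (t : nat) : 0 < Num.sqrt (t.+1)%:R :> R.
Proof. by rewrite sqrtr_gt0 ltr0n. Qed.

Lemma casbo_Sigma_coef (t : nat) :
  beta_t beta t.+1 * gamma_t alpha beta nu t / alpha_t alpha t = nu.
Proof.
rewrite /beta_t /gamma_t /alpha_t.
have := sqrt_gt0 t; have : Num.sqrt (t.+1)%:R ^+ 2 = (t.+1)%:R :> R.
  by rewrite sqr_sqrtr // ler0n.
set s := Num.sqrt _ => <- s_gt0; field.
by rewrite !gt_eqF.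
Qed.

Lemma casbo_identity_coef (t : nat) : (1 <= t)%N ->
  (alpha_t alpha t)^-1 * (beta_t beta t.+1 / beta_t beta t - omega_t R t)
  = (t%:R * alpha_t alpha t)^-1.
Proof.
move=> t_ge1; have t_gt0 : 0 < t%:R :> R by rewrite ltr0n.
have := sqrt_gt0 t; rewrite /alpha_t /beta_t /omega_t -natr1 => s_gt0.
by field; rewrite !gt_eqF ?mulr_gt0.
Qed.

Lemma casbo_identity_coef_ge0 (t : nat) : (1 <= t)%N ->
  0 <= (alpha_t alpha t)^-1 * (beta_t beta t.+1 / beta_t beta t - omega_t R t).
Proof.
move=> t_ge1; rewrite casbo_identity_coef // invr_ge0 mulr_ge0 ?ler0n //.
by rewrite ltW // mulr_gt0 ?sqrtr_gt0 ?ltr0n.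
Qed.

End Schedule.

Theorem theorem3 (R : rcfType) (alpha beta nu : R)
  (halpha : 0 < alpha) (hbeta : 0 < beta) (hnu : 0 < nu)
  (t : nat) (ht : (1 <= t)%N) (d : nat) (Sigma : 'M[R]_d)
  (hSigma : spd Sigma) :
  exists H : 'M[R]_d,
    sym_mx H /\
    loewner_le H
      (((alpha_t alpha t)^-1 * (beta_t beta t.+1 / beta_t beta t - omega_t R t))%:M
         + ((beta_t beta t.+1 * gamma_t alpha beta nu t / alpha_t alpha t) *: Sigma)) /\
    (forall S : 'M[R]_d, is_spd_sqrt S Sigma ->
       loewner_le nu%:M (invmx S *m H *m invmx S)).
Proof.
exists (nu *: Sigma); split; last split.
- by rewrite /sym_mx linearZ /=; case: hSigma => ->.
- rewrite casbo_Sigma_coef //; apply: loewner_le_addl.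
  exact: casbo_identity_coef_ge0.
- move=> S S_sqrt; rewrite -scalemxAr -scalemxAl invmx_spd_sqrt_conj //.
  by rewrite scalemx1; apply: loewner_lexx.
Qed.
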